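(* Let $n\ge 2$, $N=\{1,\dots,n\}$, for each $i\in N$ let $A_i$ be a nonempty finite set, $A=\prod_{i\in N}A_i$, $u_i:A\to\mathbb{R}$, $u(a)=(u_i(a))_{i\in N}$, $V=\operatorname{co}\{u(a):a\in A\}$ and $F^*=\prod_{i\in N}\left[\min_{a\in A}u_i(a),\ \max_{a\in A}u_i(a)\right]$. Then $V\neq F^*$ if and only if there exist two points $u,\tilde u\in V$ with $u\neq\tilde u$ satisfying: (1) there exists $\lambda\in\mathbb{R}^n\setminus\{\mathbf 0\}$ such that for all $\bar u\in\mathbb{R}^n$: $\bar u\in\arg\max_{u'\in V}\lambda\cdot u'$ if and only if $\bar u\in\{tu+(1-t)\tilde u: t\in[0,1]\}$; (2) there exist at least two players $i\in N$ such that $u_i\neq\tilde u_i$.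
   Context: $\operatorname{co}$ denotes convex hull. *)

From HB Require Import structures.
From mathcomp Require Import all_boot all_order all_algebra.
Set Implicit Arguments. Unset Strict Implicit. Unset Printing Implicit Defensive.
Import Order.TTheory GRing.Theory Num.Theory.
Local Open Scope ring_scope.

(* Points of R^n are row vectors 'rV[R]_n; coordinate i of x is x ord0 i. *)

Definition conv (R : realFieldType) (n : nat) (S : 'rV[R]_n -> Prop)
  : 'rV[R]_n -> Prop :=
  fun x => exists (k : nat) (w : 'I_k -> R) (p : 'I_k -> 'rV[R]_n),
    (forall j, 0 <= w j) /\ \sum_(j < k) w j = 1 /\
    (forall j, S (p j)) /\ x = \sum_(j < k) w j *: p j.

Definition payoffs (R : realFieldType) (n : nat) (T : finType)
  (u : T -> 'rV[R]_n) : 'rV[R]_n -> Prop :=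
  fun x => exists a, x = u a.

(* min_{a in T} f a and max_{a in T} f a (T nonempty; junk 0 if T empty). *)
Definition fmin (R : realFieldType) (T : finType) (f : T -> R) : R :=
  match [pick a : T] with
  | Some a0 => \big[Order.min/f a0]_(a : T) f a
  | None => 0
  end.
Definition fmax (R : realFieldType) (T : finType) (f : T -> R) : R :=
  match [pick a : T] with
  | Some a0 => \big[Order.max/f a0]_(a : T) f a
  | None => 0
  end.

Definition Fstar (R : realFieldType) (n : nat) (T : finType)
  (u : T -> 'rV[R]_n) : 'rV[R]_n -> Prop :=
  fun x => forall i : 'I_n,
    fmin (fun a => u a ord0 i) <= x ord0 i <= fmax (fun a => u a ord0 i).

Definition dotp (R : realFieldType) (n : nat) (x y : 'rV[R]_n) : R :=
  \sum_(i < n) x ord0 i * y ord0 i.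

Definition argmax_lin (R : realFieldType) (n : nat) (V : 'rV[R]_n -> Prop)
  (l : 'rV[R]_n) : 'rV[R]_n -> Prop :=
  fun x => V x /\ forall y, V y -> dotp l y <= dotp l x.

Definition segment (R : realFieldType) (n : nat) (u v : 'rV[R]_n)
  : 'rV[R]_n -> Prop :=
  fun x => exists t : R, 0 <= t <= 1 /\ x = t *: u + (1 - t) *: v.

From HB Require Import structures.
From mathcomp Require Import all_boot all_order all_algebra.
From mathcomp Require Import reals.
From mathcomp Require Import ring lra.
Import Order.TTheory GRing.Theory Num.Theory.
Local Open Scope ring_scope.
Set Implicit Arguments. Unset Strict Implicit.

(* V is always contained in the box F*, and V = F* as soon as every corner of
   F* is a payoff vector.  Maximizing the sign vector of a corner, a breakpoint
   argument shows that a corner can only be missed if some exposed face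
   {a | l.u(a) maximal} with l_k <> 0 contains two payoffs differing in
   coordinate k.  Tilting l inside such a face (lexicographic refinement plus
   another breakpoint) shrinks it to an exposed edge whose endpoints still
   differ in coordinate k; as l is constant on the edge and l_k <> 0, they
   differ in a second coordinate as well.  Conversely, in a box an exposed edge
   is parallel to a coordinate axis: exchanging one coordinate between its
   endpoints stays in the box and in the maximizing set, hence on the edge. *)

Section Dotp.
Variables (R : realFieldType) (n : nat).
Implicit Types (l x y : 'rV[R]_n).

Lemma dotpDl l1 l2 x : dotp (l1 + l2) x = dotp l1 x + dotp l2 x.
Proof. by rewrite /dotp -big_split; apply: eq_bigr => i _; rewrite mxE mulrDl. Qed.

Lemma dotpZl c l x : dotp (c *: l) x = c * dotp l x.
Proof. by rewrite /dotp mulr_sumr; apply: eq_bigr => i _; rewrite mxE mulrA. Qed.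

Lemma dotpNl l x : dotp (- l) x = - dotp l x.
Proof. by rewrite -scaleN1r dotpZl mulN1r. Qed.

Lemma dotp0l x : dotp 0 x = 0.
Proof. by rewrite -(scale0r 0) dotpZl mul0r. Qed.

Lemma dotp_sumr (I : finType) l (w : I -> R) (p : I -> 'rV[R]_n) :
  dotp l (\sum_j w j *: p j) = \sum_j w j * dotp l (p j).
Proof.
rewrite /dotp; under eq_bigr => i _ do rewrite summxE mulr_sumr.
rewrite exchange_big; apply: eq_bigr => j _; rewrite mulr_sumr.
by apply: eq_bigr => i _; rewrite mxE mulrCA.
Qed.

Lemma dotp_deltal (i : 'I_n) x : dotp (delta_mx ord0 i) x = x ord0 i.
Proof.
rewrite /dotp (bigD1 i) //= big1 ?addr0; first by rewrite mxE !eqxx mul1r.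
by move=> j /negbTE ji; rewrite mxE ji andbF mul0r.
Qed.

Lemma dotp_eq_coord_neq l x y (k : 'I_n) :
  dotp l x = dotp l y -> l ord0 k != 0 -> x ord0 k != y ord0 k ->
  exists2 j, j != k & x ord0 j != y ord0 j.
Proof.
move=> lxy lk xyk.
case: (pickP (fun j => (j != k) && (x ord0 j != y ord0 j))) => [j /andP[]|same].
  by exists j.
have : dotp l x - dotp l y = l ord0 k * (x ord0 k - y ord0 k).
  rewrite /dotp -sumrB (bigD1 k) //= big1 ?addr0 ?mulrBr // => j jk.
  by move: (same j); rewrite jk /= => /negbFE/eqP ->; rewrite subrr.
by rewrite lxy subrr => /esym/eqP; rewrite mulf_eq0 subr_eq0 (negbTE lk) (negbTE xyk).
Qed.

End Dotp.

Section ConvexHull.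
Variables (R : realFieldType) (n : nat).
Implicit Types (S : 'rV[R]_n -> Prop) (l x y p q : 'rV[R]_n).

Lemma conv_finsum S (I : finType) (w : I -> R) (r : I -> 'rV[R]_n) :
  (forall i, 0 <= w i) -> \sum_i w i = 1 -> (forall i, S (r i)) ->
  conv S (\sum_i w i *: r i).
Proof.
move=> w0 w1 rS; exists #|I|, (fun j => w (enum_val j)), (fun j => r (enum_val j)).
split=> [j|]; first exact: w0.
split; first by rewrite -w1 -big_enum_val.
by split=> [j|]; [apply: rS | rewrite -(big_enum_val (fun i => w i *: r i))].
Qed.

Lemma conv_segment S p q x : S p -> S q -> segment p q x -> conv S x.
Proof.
move=> Sp Sq [t [/andP[t0 t1] ->]].
have := @conv_finsum S _ (fun b : bool => if b then t else 1 - t)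
  (fun b => if b then p else q).
rewrite !big_bool /=; apply=> [[]||[]] //; first by rewrite subr_ge0.
by rewrite addrC subrK.
Qed.

Lemma sub_conv S x : S x -> conv S x.
Proof.
move=> Sx; apply: (conv_segment Sx Sx); exists 1.
by rewrite ler01 lexx subrr scale0r addr0 scale1r.
Qed.

Lemma conv_mono S1 S2 x : (forall y, S1 y -> S2 y) -> conv S1 x -> conv S2 x.
Proof.
move=> S12 [k [w [r [w0 [w1 [rS ->]]]]]].
by exists k, w, r; do 2!split=> //; split=> // j; apply/S12/rS.
Qed.

Lemma conv_dotp_le S l m x :
  (forall y, S y -> dotp l y <= m) -> conv S x -> dotp l x <= m.
Proof.
move=> Sm [k [w [r [w0 [w1 [rS ->]]]]]].
rewrite dotp_sumr -[m]mul1r -w1 mulr_suml; apply: ler_sum => j _.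
exact: ler_wpM2l (Sm _ (rS j)).
Qed.

Lemma conv_dotp_ge S l m x :
  (forall y, S y -> m <= dotp l y) -> conv S x -> m <= dotp l x.
Proof.
move=> Sm Sx; rewrite -lerN2 -dotpNl; apply: conv_dotp_le Sx => y Sy.
by rewrite dotpNl lerN2 Sm.
Qed.

Lemma conv_sub_segment S p q x :
  (forall y, S y -> segment p q y) -> conv S x -> segment p q x.
Proof.
move=> Sseg [k [w [r [w0 [w1 [rS ->]]]]]].
have /fin_all_exists [th hth] :
    forall j, exists t : R, 0 <= t <= 1 /\ r j = t *: p + (1 - t) *: q.
  by move=> j; apply: Sseg.
exists (\sum_j w j * th j); split.
  have [th0 th1] : (forall j, 0 <= th j) /\ (forall j, th j <= 1).
    by split=> j; case: (hth j) => /andP[].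
  rewrite sumr_ge0 => [|j _]; last exact: mulr_ge0.
  by rewrite -w1 ler_sum // => j _; apply: ler_piMr.
under eq_bigr => j _ do rewrite (hth j).2 scalerDr !scalerA.
rewrite big_split /= -!scaler_suml; congr (_ + _ *: _).
by rewrite -[in RHS]w1 -sumrB; apply: eq_bigr => j _; rewrite mulrBr mulr1.
Qed.

(* The slack of a maximizer of conv S is a convex combination of the slacks of
   its points, so every point carrying positive weight maximizes over S. *)
Lemma argmax_conv S l y0 : argmax_lin S l y0 ->
  forall x, argmax_lin (conv S) l x <-> conv (argmax_lin S l) x.
Proof.
move=> [Sy0 y0max] x; set m := dotp l y0.
split=> [[[k [w [r [w0 [w1 [rS xE]]]]]] xmax] | cx].
  have le_m j : 0 <= m - dotp l (r j) by rewrite subr_ge0 y0max.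
  have slack0 : \sum_j w j * (m - dotp l (r j)) = 0.
    apply/eqP; rewrite eq_le sumr_ge0 => [|j _]; last exact: mulr_ge0.
    under eq_bigr do rewrite mulrBr.
    rewrite sumrB -mulr_suml w1 mul1r -dotp_sumr -xE subr_le0 andbT.
    by apply: xmax; apply: sub_conv.
  have rmax j : w j != 0 -> dotp l (r j) = m.
    move=> wj; have := psumr_eq0P (fun j _ => mulr_ge0 (w0 j) (le_m j)) slack0 isT.
    by move=> /(_ j)/eqP; rewrite mulf_eq0 (negbTE wj) subr_eq0 => /eqP.
  exists k, w, (fun j => if w j == 0 then y0 else r j); do 2!split=> //.
  split=> [j|].
    case: eqP => [_|/eqP wj]; first by split.
    by split=> [|z Sz]; [apply: rS | rewrite rmax // y0max].
  by rewrite xE; apply: eq_bigr => j _; case: eqP => // ->; rewrite !scale0r.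
have m_le : m <= dotp l x by apply: conv_dotp_ge cx => y [_]; apply.
split=> [|z Sz]; first by apply: conv_mono cx => y [].
exact: le_trans (conv_dotp_le y0max Sz) m_le.
Qed.

Lemma argmax_conv_segment S l p q :
  argmax_lin S l p -> argmax_lin S l q ->
  (forall y, argmax_lin S l y -> segment p q y) ->
  forall x, argmax_lin (conv S) l x <-> segment p q x.
Proof.
move=> pmax qmax onseg x; apply: iff_trans (argmax_conv pmax x) _.
by split; [apply: conv_sub_segment | apply: conv_segment].
Qed.

End ConvexHull.

Section FinMinMax.
Variables (R : realFieldType) (T : finType) (f : T -> R).

Lemma le_fmax a : f a <= fmax f.
Proof. by rewrite /fmax; case: pickP => [a1 _|/(_ a)//]; apply: le_bigmax. Qed.

Lemma fmin_le a : fmin f <= f a.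
Proof. by rewrite /fmin; case: pickP => [a1 _|/(_ a)//]; apply: bigmin_le. Qed.

Lemma fmax_attained (a0 : T) : exists a, fmax f = f a.
Proof.
rewrite /fmax; case: pickP => [a1 _|/(_ a0)//].
apply: (big_ind (fun y => exists a, y = f a)) => [|_ _ [b ->] [c ->]|a _].
- by exists a1.
- by rewrite /Order.max; case: ifP => _; [exists c | exists b].
- by exists a.
Qed.

Lemma fmin_attained (a0 : T) : exists a, fmin f = f a.
Proof.
rewrite /fmin; case: pickP => [a1 _|/(_ a0)//].
apply: (big_ind (fun y => exists a, y = f a)) => [|_ _ [b ->] [c ->]|a _].
- by exists a1.
- by rewrite /Order.min; case: ifP => _; [exists b | exists c].
- by exists a.
Qed.

End FinMinMax.

Section Tilt.
Variables (R : realFieldType) (T : finType).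
Implicit Types (F G : T -> R).

(* t is the first slope at which some p with G v < G p ties with v. *)
Lemma breakpoint_tilt (S : {set T}) F G v w :
  v \in S -> (forall b, b \in S -> F b <= F v) -> w \in S -> G v < G w ->
  exists t p, [/\ 0 <= t, p \in S, G v < G p, F p + t * G p = F v + t * G v &
    forall b, b \in S -> F b + t * G b <= F v + t * G v].
Proof.
move=> vS Fv wS Gvw; pose r b := (F v - F b) / (G b - G v).
have [p /andP[pS Gvp] pmin] := @arg_minP _ _ _ w [pred b | (b \in S) && (G v < G b)] r
  (introT andP (conj wS Gvw)).
have r_ge0 b : b \in S -> G v < G b -> 0 <= r b.
  by move=> bS Gvb; rewrite divr_ge0 ?subr_ge0 ?Fv // ltW // subr_gt0.
have rE b : G v < G b -> r b * (G b - G v) = F v - F b.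
  by move=> Gvb; rewrite /r divfK // subr_eq0 gt_eqF.
exists (r p), p; split => //; first exact: r_ge0.
  by have := rE p Gvp; rewrite mulrBr; lra.
move=> b bS; case: (ltP (G v) (G b)) => Gvb.
  have dpos : 0 < G b - G v by rewrite subr_gt0.
  have := ler_wpM2r (ltW dpos) (pmin b (introT andP (conj bS Gvb))).
  by rewrite rE // mulrBr; lra.
by have := Fv b bS; have := ler_wpM2l (r_ge0 p pS Gvp) Gvb; lra.
Qed.

Lemma uniform_tilt F G :
  exists2 e, 0 < e & forall a b, F a < F b -> F a + e * G a < F b + e * G b.
Proof.
pose d (ab : T * T) : R := `|G ab.1 - G ab.2| + 1.
pose r (ab : T * T) : R := (F ab.2 - F ab.1) / d ab.
have d_gt0 ab : 0 < d ab by rewrite ltr_wpDl.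
set e := \big[Order.min/1]_(ab | F ab.1 < F ab.2) r ab.
have e_gt0 : 0 < e.
  by apply/bigmin_gtP; split=> // ab Fab; rewrite divr_gt0 ?subr_gt0.
exists e => // a b Fab.
have e_le : e <= r (a, b) by apply: bigmin_le_cond.
have rdE : r (a, b) * d (a, b) = F b - F a by rewrite /r divfK ?gt_eqF.
have := ler_wpM2r (ltW (d_gt0 (a, b))) e_le.
have := ler_wpM2l (ltW e_gt0) (ler_norm (G a - G b)).
rewrite rdE /d /= !mulrDr mulrN mulr1; lra.
Qed.

Lemma uniform_tilt_lex F G : exists2 e, 0 < e & forall a,
  (forall b, F b + e * G b <= F a + e * G a) <->
  (forall b, F b <= F a) /\ (forall b, (forall c, F c <= F b) -> G b <= G a).
Proof.
have [e e_gt0 tilt] := uniform_tilt F G; exists e => // a.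
split=> [amax | [Fmax Gmax] b].
  have Fmax : forall b, F b <= F a.
    have [b _ bmax] := @arg_maxP _ _ _ a predT F isT.
    move=> c; apply: le_trans (bmax c isT) _; rewrite leNgt; apply/negP.
    by move=> /tilt; rewrite ltNge amax.
  split=> // b bmax; have Fab : F b = F a by apply/eqP; rewrite eq_le Fmax bmax.
  by have := amax b; rewrite Fab lerD2l ler_pM2l.
case: (ltP (F b) (F a)) => [/tilt/ltW // | Fab].
have Fba : F b = F a by apply/eqP; rewrite eq_le Fmax Fab.
have bmax c : F c <= F b by rewrite Fba.
by have := ler_wpM2l (ltW e_gt0) (Gmax b bmax); rewrite Fba lerD2l.
Qed.

End Tilt.

Section Faces.
Variables (R : realFieldType) (n : nat) (T : finType) (u : T -> 'rV[R]_n).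
Implicit Types (l mu : 'rV[R]_n) (S : {set T}).

Definition face l : {set T} :=
  [set a | [forall b, dotp l (u b) <= dotp l (u a)]].

Definition coord_varies (k : 'I_n) S :=
  exists a b, [/\ a \in S, b \in S & u a ord0 k != u b ord0 k].

Lemma faceP l a : reflect (forall b, dotp l (u b) <= dotp l (u a)) (a \in face l).
Proof. by rewrite inE; apply: forallP. Qed.

Lemma face0 : face 0 = setT.
Proof. by apply/setP => a; rewrite in_setT; apply/faceP => b; rewrite !dotp0l. Qed.

Lemma face_dotp_eq l a b :
  a \in face l -> b \in face l -> dotp l (u a) = dotp l (u b).
Proof. by move=> /faceP amax /faceP bmax; apply/eqP; rewrite eq_le amax bmax. Qed.

Lemma face_nonzero l0 l : l0 != 0 -> face l \subset face l0 ->
  exists2 l', l' != 0 & face l' = face l.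
Proof.
move=> l0_neq0 sub; have [l_eq0|] := eqVneq l 0; last by exists l.
exists l0 => //; apply/eqP; move: sub.
by rewrite l_eq0 face0 eqEsubset subsetT.
Qed.

Lemma argmax_payoffs l x :
  argmax_lin (payoffs u) l x <-> exists2 a, a \in face l & x = u a.
Proof.
split=> [[[a ->] xmax] | [a /faceP amax ->]].
  by exists a => //; apply/faceP => b; apply: xmax; exists b.
by split=> [|_ [b ->]]; [exists a | apply: amax].
Qed.

Lemma face_of_face l mu : exists l', face l' =
  [set a in face l | [forall b in face l, dotp mu (u b) <= dotp mu (u a)]].
Proof.
have [e _ lex] := uniform_tilt_lex (fun a => dotp l (u a)) (fun a => dotp mu (u a)).
have E b : dotp (l + e *: mu) (u b) = dotp l (u b) + e * dotp mu (u b).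
  by rewrite dotpDl dotpZl.
exists (l + e *: mu); apply/setP => a; rewrite !inE.
apply/forallP/andP => [amax | [/forallP Fmax /forallP Gmax] b].
  have /(lex a).1 [Fmax Gmax] : forall b,
      dotp l (u b) + e * dotp mu (u b) <= dotp l (u a) + e * dotp mu (u a).
    by move=> b; rewrite -!E.
  split; first exact/forallP.
  by apply/forallP => b; apply/implyP => /faceP; apply: Gmax.
rewrite !E; apply: (lex a).2; split=> // c cmax.
by apply: (implyP (Gmax c)); apply/faceP.
Qed.

Lemma argmax_face_segment l p q : p \in face l -> q \in face l ->
  (forall a, a \in face l -> segment (u p) (u q) (u a)) ->
  forall x, argmax_lin (conv (payoffs u)) l x <-> segment (u p) (u q) x.
Proof.
move=> pl ql onseg; apply: argmax_conv_segment.
- by apply/argmax_payoffs; exists p.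
- by apply/argmax_payoffs; exists q.
- by move=> y /argmax_payoffs [a al ->]; apply: onseg.
Qed.

Section Edges.
Variable k : 'I_n.

(* Tilt e_j towards s e_k until some p ties with the maximizer v of
   coordinate j: the tied set is a subface containing v and p, and if it is the
   whole face then x_j + t s x_k is constant on it. *)
Lemma proper_subface_or_affine l (j : 'I_n) : coord_varies k (face l) ->
  (exists l', face l' \proper face l /\ coord_varies k (face l')) \/
  exists c, forall a b, a \in face l -> b \in face l ->
    u a ord0 j + c * u a ord0 k = u b ord0 j + c * u b ord0 k.
Proof.
move=> [a [b [al bl ab]]]; set S := face l; pose F x := u x ord0 j.
have [v vS vmax] := @arg_maxP _ _ _ a (mem S) F al.
have [w wS vw] : exists2 w, w \in S & u v ord0 k != u w ord0 k.
  have [vak|] := eqVneq (u v ord0 k) (u a ord0 k); last by exists a.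
  by exists b; rewrite ?vak.
have [s Gvw] : exists s, s * u v ord0 k < s * u w ord0 k.
  case: (ltgtP (u v ord0 k) (u w ord0 k)) vw => [lt _|gt _|->]; rewrite ?eqxx //.
    by exists 1; rewrite !mul1r.
  by exists (-1); rewrite !mulN1r ltrN2.
pose G x := s * u x ord0 k.
have [t [p [_ pS Gvp Fp Fmax]]] :=
  @breakpoint_tilt _ _ S F G v w vS (fun b bS => vmax b bS) wS Gvw.
pose mu : 'rV[R]_n := delta_mx ord0 j + (t * s) *: delta_mx ord0 k.
have muE x : dotp mu (u x) = F x + t * G x.
  by rewrite dotpDl dotpZl !dotp_deltal /G mulrA.
pose H := [set x in S | [forall y in S, dotp mu (u y) <= dotp mu (u x)]].
have tie_H x : x \in S -> F x + t * G x = F v + t * G v -> x \in H.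
  move=> xS xE; rewrite inE xS; apply/forallP => y; apply/implyP => yS.
  by rewrite !muE xE Fmax.
have [HS|HS] := eqVneq H S.
  right; exists (t * s) => x y xS yS.
  have tie x' : x' \in S -> F x' + t * G x' = F v + t * G v.
    rewrite -HS inE => /andP[x'S /forallP/(_ v)/implyP/(_ vS)].
    by rewrite !muE => vle; apply/eqP; rewrite eq_le Fmax.
  by move: (tie x xS) (tie y yS); rewrite /F /G !mulrA => -> ->.
left; have [l' El'] := face_of_face l mu; exists l'; rewrite El'; split.
  by rewrite properEneq HS; apply/subsetP => x; rewrite inE => /andP[].
exists v, p; split; [exact: tie_H | exact: tie_H | ].
by apply: contraTneq Gvp => e; rewrite /G e ltxx.
Qed.

Lemma affine_coords_segment S : coord_varies k S ->
  (forall j, j != k -> exists c, forall a b, a \in S -> b \in S ->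
    u a ord0 j + c * u a ord0 k = u b ord0 j + c * u b ord0 k) ->
  exists p q, [/\ p \in S, q \in S, u p ord0 k != u q ord0 k &
    forall a, a \in S -> segment (u p) (u q) (u a)].
Proof.
move=> [a [b [aS bS ab]]] affine; pose F x := u x ord0 k.
have [p pS pmax'] := @arg_maxP _ _ _ a (mem S) F aS.
have [q qS qmin'] := @arg_minP _ _ _ a (mem S) F aS.
have pmax x : x \in S -> F x <= F p by exact: pmax'.
have qmin x : x \in S -> F q <= F x by exact: qmin'.
have Fqp : F q < F p.
  rewrite lt_neqAle (le_trans (qmin a aS) (pmax a aS)) andbT.
  apply: contraNneq ab => Fqp; move: (qmin a aS) (pmax a aS) (qmin b bS) (pmax b bS).
  by rewrite Fqp /F => *; apply/eqP; lra.
have Fqp_neq0 : F p - F q != 0 by rewrite subr_eq0 gt_eqF.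
exists p, q; split => //; first by apply: contraTneq Fqp => e; rewrite /F e ltxx.
move=> x xS; exists ((F x - F q) / (F p - F q)); split.
  rewrite divr_ge0 ?subr_ge0 ?qmin ?(ltW Fqp) //=.
  by rewrite ler_pdivrMr ?subr_gt0 // mul1r lerD2r pmax.
apply/rowP => i; rewrite !mxE; have [->|ik] := eqVneq i k.
  by rewrite /F; field.
have [c hc] := affine i ik.
have e1 : u x ord0 i = u q ord0 i + c * (u q ord0 k - u x ord0 k).
  by have := hc x q xS qS; rewrite mulrBr; lra.
have e2 : u p ord0 i = u q ord0 i + c * (u q ord0 k - u p ord0 k).
  by have := hc p q pS qS; rewrite mulrBr; lra.
by rewrite e1 e2 /F; field.
Qed.

Lemma exposed_edge l : coord_varies k (face l) ->
  exists l' p q, [/\ face l' \subset face l, p \in face l', q \in face l',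
    u p ord0 k != u q ord0 k &
    forall a, a \in face l' -> segment (u p) (u q) (u a)].
Proof.
have [N] := ubnP #|face l|; elim: N l => // N IH l /ltnSE le_lN lvar.
case: (boolp.pselect
  (exists l', face l' \proper face l /\ coord_varies k (face l'))).
  move=> [l' [ll' l'var]].
  have [l'' [p [q [sub pl'' ql'' pqk onseg]]]] :=
    IH l' (leq_trans (proper_card ll') le_lN) l'var.
  by exists l'', p, q; split=> //; apply: subset_trans sub (proper_sub ll').
move=> no_sub; have [|p [q [pl ql pqk onseg]]] := affine_coords_segment lvar.
  by move=> j _; case: (proper_subface_or_affine j lvar) => // /no_sub.
by exists l, p, q; split.
Qed.

End Edges.
End Faces.

Section Box.
Variables (R : realFieldType) (n : nat).
Implicit Types (l x y lo hi : 'rV[R]_n).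

Definition setcoord x (i : 'I_n) (c : R) : 'rV[R]_n :=
  \row_m (if m == i then c else x ord0 m).

Definition box_corner lo hi (s : {ffun 'I_n -> bool}) : 'rV[R]_n :=
  \row_i (if s i then hi ord0 i else lo ord0 i).

Lemma dotp_setcoord l x i c :
  dotp l (setcoord x i c) = dotp l x + l ord0 i * (c - x ord0 i).
Proof.
rewrite /dotp (bigD1 i) //= [in RHS](bigD1 i) //= mxE eqxx.
rewrite (eq_bigr (fun m => l ord0 m * x ord0 m)) => [|m /negbTE mi].
  by rewrite mulrBr addrAC addrCA subrr addr0.
by rewrite mxE mi.
Qed.

(* Exchanging coordinate i between the endpoints stays in B and in the
   maximizing set, hence on the segment, which forces the parameter to be 0. *)
Lemma exposed_segment_axis (B : 'rV[R]_n -> Prop) l p q :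
  (forall x y i, B x -> B y -> B (setcoord x i (y ord0 i))) ->
  (forall x, argmax_lin B l x <-> segment p q x) ->
  forall i j, i != j -> p ord0 i != q ord0 i -> p ord0 j = q ord0 j.
Proof.
move=> Bswap seg i j ij pqi.
have [[Bp pmax] [Bq qmax]] : argmax_lin B l p /\ argmax_lin B l q.
  split; apply/seg; [exists 1 | exists 0]; rewrite ler01 lexx; split=> //.
    by rewrite subrr scale0r addr0 scale1r.
  by rewrite subr0 scale0r scale1r add0r.
have lpq : dotp l p = dotp l q by apply/eqP; rewrite eq_le pmax // qmax.
pose z := setcoord p i (q ord0 i).
have := qmax _ (Bswap _ _ i Bq Bp); have := pmax z (Bswap _ _ i Bp Bq).
rewrite !dotp_setcoord lpq !mulrBr => le_pq le_qp.
have zmax : argmax_lin B l z.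
  split=> [|y By]; first exact: Bswap.
  by rewrite dotp_setcoord lpq mulrBr; have := pmax y By; lra.
have [t [_ zE]] := (seg z).1 zmax.
have zi := congr1 (fun v : 'rV[R]_n => v ord0 i) zE.
have zj := congr1 (fun v : 'rV[R]_n => v ord0 j) zE.
rewrite /= !mxE eqxx in zi; rewrite /= !mxE eq_sym (negbTE ij) in zj.
have : t * (p ord0 i - q ord0 i) = 0 by move: zi; rewrite mulrBl mulrBr mul1r; lra.
move/eqP; rewrite mulf_eq0 subr_eq0 (negbTE pqi) orbF => /eqP t0.
by move: zj; rewrite t0 mul0r add0r subr0 mul1r.
Qed.

Lemma itv_convex_comb (a b x : R) : a <= x <= b ->
  exists t, 0 <= t <= 1 /\ x = t * b + (1 - t) * a.
Proof.
move=> /andP[ax xb]; have [ab|ab] := eqVneq a b.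
  exists 1; rewrite ler01 lexx subrr mul0r addr0 mul1r; split=> //.
  by apply/eqP; rewrite eq_le xb -ab ax.
have ba_gt0 : 0 < b - a by rewrite subr_gt0 lt_neqAle ab (le_trans ax xb).
exists ((x - a) / (b - a)); split; last by field; rewrite gt_eqF.
by rewrite divr_ge0 ?(ltW ba_gt0) ?subr_ge0 //= ler_pdivrMr // mul1r lerD2r.
Qed.

(* Corner s gets the product weight prod_i (al i or 1 - al i): hi is chosen in
   coordinate i with probability al i, independently. *)
Lemma box_sub_conv_corners lo hi x :
  (forall i, lo ord0 i <= x ord0 i <= hi ord0 i) ->
  conv (fun y => exists s, y = box_corner lo hi s) x.
Proof.
move=> xbox; have /fin_all_exists [al hal] := fun i => itv_convex_comb (xbox i).
pose W (s : {ffun 'I_n -> bool}) := \prod_i (if s i then al i else 1 - al i).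
have W_ge0 s : 0 <= W s.
  apply: prodr_ge0 => i _; have [/andP[al0 al1] _] := hal i.
  by case: (s i); rewrite ?subr_ge0.
have W_sum1 : \sum_s W s = 1.
  rewrite /W -(bigA_distr_bigA (fun i (b : bool) => if b then al i else 1 - al i)).
  by rewrite big1 // => i _; rewrite big_bool /= addrC subrK.
have W_coord i0 : \sum_s W s * box_corner lo hi s ord0 i0 = x ord0 i0.
  pose c i (b : bool) := (if b then al i else 1 - al i) *
    (if i == i0 then (if b then hi ord0 i else lo ord0 i) else 1).
  transitivity (\sum_(s : {ffun 'I_n -> bool}) \prod_i c i (s i)).
    apply: eq_bigr => s _; rewrite /c big_split /= mxE; congr (_ * _).
    by rewrite (bigD1 i0) //= eqxx big1 ?mulr1 // => i /negbTE ->.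
  rewrite -(bigA_distr_bigA c) (bigD1 i0) //= [X in _ * X]big1.
    by rewrite big_bool /c eqxx /= (hal i0).2 /=; ring.
  by move=> i /negbTE ne; rewrite big_bool /c ne /=; ring.
have -> : x = \sum_s W s *: box_corner lo hi s.
  apply/rowP => i; rewrite summxE -[LHS]/(x ord0 i) -W_coord.
  by apply: eq_bigr => s _; rewrite [RHS]mxE.
by apply: conv_finsum => // s; exists s.
Qed.

End Box.

Section PayoffBox.
Variables (R : realFieldType) (n : nat) (T : finType) (u : T -> 'rV[R]_n).

Notation lo := (\row_i fmin (fun a => u a ord0 i)).
Notation hi := (\row_i fmax (fun a => u a ord0 i)).

Lemma conv_sub_Fstar x : conv (payoffs u) x -> Fstar u x.
Proof.
move=> Vx i; rewrite -!(dotp_deltal i x); apply/andP; split.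
  apply: conv_dotp_ge Vx => _ [a ->]; rewrite dotp_deltal.
  exact: (fmin_le (fun a => u a ord0 i)).
apply: conv_dotp_le Vx => _ [a ->]; rewrite dotp_deltal.
exact: (le_fmax (fun a => u a ord0 i)).
Qed.

Lemma Fstar_setcoord x y i :
  Fstar u x -> Fstar u y -> Fstar u (setcoord x i (y ord0 i)).
Proof. by move=> Fx Fy m; rewrite mxE; case: eqP => [->|_]. Qed.

Lemma Fstar_sub_conv x : (forall s, exists a, u a = box_corner lo hi s) ->
  Fstar u x -> conv (payoffs u) x.
Proof.
move=> corners Fx.
apply: conv_mono (@box_sub_conv_corners _ _ lo hi x _) => [_ [s ->]|i].
  by have [a <-] := corners s; exists a.
by rewrite !mxE; apply: Fx.
Qed.

(* If the maximizer v of the sign vector l missed the corner in coordinate k,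
   tilting l along e_k up to the breakpoint would give a face, still with
   nonzero k-th weight, containing v and a profile differing from v there. *)
Lemma corner_payoff (a0 : T) :
  (forall (l : 'rV[R]_n) k, l ord0 k != 0 -> ~ coord_varies u k (face u l)) ->
  forall s, exists a, u a = box_corner lo hi s.
Proof.
move=> flat s; pose l : 'rV[R]_n := \row_i (if s i then 1 else -1).
pose F a := dotp l (u a).
have [v _ vmax] := @arg_maxP _ _ _ a0 predT F isT.
exists v; apply/rowP => k; rewrite !mxE.
apply/eqP/negPn/negP => ne.
have [w wk] : exists w, u w ord0 k = if s k then fmax (fun a => u a ord0 k)
                                           else fmin (fun a => u a ord0 k).
  case: (s k); [have [w ->] := fmax_attained (fun a => u a ord0 k) a0
               | have [w ->] := fmin_attained (fun a => u a ord0 k) a0]; by exists w.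
pose G a := l ord0 k * u a ord0 k.
have Gvw : G v < G w.
  rewrite /G mxE wk; case: (s k) ne => ne.
    by rewrite !mul1r lt_neqAle ne; exact: (le_fmax (fun a => u a ord0 k)).
  by rewrite !mulN1r ltrN2 lt_neqAle eq_sym ne; exact: (fmin_le (fun a => u a ord0 k)).
have [t [p [t_ge0 _ Gvp Fp Fmax]]] :=
  @breakpoint_tilt _ _ setT F G v w (in_setT v) (fun b _ => vmax b isT)
    (in_setT w) Gvw.
pose l' := l + (t * l ord0 k) *: delta_mx ord0 k.
have l'E x : dotp l' (u x) = F x + t * G x.
  by rewrite dotpDl dotpZl dotp_deltal /G mulrA.
apply: (flat l' k); first by rewrite !mxE !eqxx mulr1; case: (s k); lra.
exists v, p; split; first by apply/faceP => b; rewrite !l'E Fmax ?in_setT.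
  by apply/faceP => b; rewrite !l'E Fp Fmax ?in_setT.
by apply: contraTneq Gvp => e; rewrite /G e ltxx.
Qed.

End PayoffBox.

Theorem lemma3 (R : realType) (n : nat) (hn : (2 <= n)%N)
  (A : 'I_n -> finType) (hA : forall i, (0 < #|A i|)%N)
  (u : {dffun forall i : 'I_n, A i} -> 'rV[R]_n) :
  let V := conv (payoffs u) in
  V <> Fstar u <->
  exists uu ut : 'rV[R]_n,
    [/\ V uu, V ut, uu <> ut,
     (exists l : 'rV[R]_n, l != 0 /\
        forall ub : 'rV[R]_n, argmax_lin V l ub <-> segment uu ut ub)
   & exists i j : 'I_n, i != j /\ uu ord0 i != ut ord0 i /\ uu ord0 j != ut ord0 j].
Proof.
move=> V; pose a0 : {dffun forall i, A i} := [ffun i => enum_val (Ordinal (hA i))].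
split=> [VF | [uu [ut [_ _ _ [l [_ seg]] [i [j [ij [uti utj]]]]]]] VF]; last first.
  have Vswap x y m : V x -> V y -> V (setcoord x m (y ord0 m)).
    by rewrite VF; apply: Fstar_setcoord.
  by move/eqP: utj; apply; apply: exposed_segment_axis Vswap seg i j ij uti.
have [[l0 [k [l0k l0var]]] | flat] :=
  boolp.pselect (exists (l : 'rV[R]_n) k,
                   l ord0 k != 0 /\ coord_varies u k (face u l)).
  have [l [p [q [sub pl ql pqk onseg]]]] := exposed_edge l0var.
  have l0_neq0 : l0 != 0 by apply: contraTneq l0k => ->; rewrite mxE eqxx.
  have [l' l'_neq0 El'] := face_nonzero l0_neq0 sub.
  have [j jk pqj] := dotp_eq_coord_neq
    (face_dotp_eq (subsetP sub _ pl) (subsetP sub _ ql)) l0k pqk.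
  exists (u p), (u q); split.
  - by apply: sub_conv; exists p.
  - by apply: sub_conv; exists q.
  - by move=> upq; move: pqk; rewrite upq eqxx.
  - by exists l'; split=> //; apply: argmax_face_segment; rewrite El'.
  - by exists k, j; rewrite eq_sym jk.
case: VF; apply: boolp.funext => x; apply: boolp.propext.
split=> [|Fx]; first exact: conv_sub_Fstar.
apply: (Fstar_sub_conv _ Fx); apply: (@corner_payoff _ _ _ u a0) => l k lk lvar.
by apply: flat; exists l, k.
Qed.
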